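(* Let $$\Delta t_{\mathrm{CFL}}=\frac{2}{\frac{2\hbar}{m}\left(\frac{1}{(\Delta x)^2}+\frac{1}{(\Delta y)^2}+\frac{1}{(\Delta z)^2}\right)+\frac{\max_{i,j,k}|U_{i,j,k}|}{\hbar}}$$ be the CFL limit of the whole region, and for $1\le i\le n_x$, $1\le j\le n_y$, $1\le k\le n_z$ let $\Delta t^{(i,j,k)}_{\mathrm{CFL,gen}}$ be the generalized CFL limit of the single-cell region ($n_x=n_y=n_z=1$) formed by the primary cell with corners $(i,j,k)$ and $(i+1,j+1,k+1)$, with potential $U_{i+a,j+b,k+c}$ ($a,b,c\in\{0,1\}$) at its local node $(a+1,b+1,c+1)$. Then $$\Delta t_{\mathrm{CFL}}\le\min_{i,j,k}\Delta t^{(i,j,k)}_{\mathrm{CFL,gen}}.$$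
   Context: Fix constants $\hbar>0$, $m>0$, cell sizes $\Delta x,\Delta y,\Delta z>0$ and positive integers $n_x,n_y,n_z$. The region is a box of $n_x\times n_y\times n_z$ primary cells of size $\Delta x\times\Delta y\times\Delta z$ with primary nodes $(i,j,k)$, $1\le i\le n_x+1$, $1\le j\le n_y+1$, $1\le k\le n_z+1$, carrying real potential values $U_{i,j,k}$. For a single-cell region (local nodes $(a+1,b+1,c+1)$, $a,b,c\in\{0,1\}$, ordered by $(a+1)+2b+4c$), let $D_U$ be the $8\times 8$ diagonal matrix of its node potentials, $I_p$ the $p\times p$ identity, $W_1=[-1\ \ 1]$, $\otimes$ the Kronecker product, and define $D_V''=\frac{\Delta x\Delta y\Delta z}{8}I_8$; $D=-[I_2\otimes I_2\otimes W_1^T\ \ I_2\otimes W_1^T\otimes I_2\ \ W_1^T\otimes I_2\otimes I_2]$; $D_S''=\mathrm{diag}(\frac{\Delta y\Delta z}{4}I_4,\frac{\Delta x\Delta z}{4}I_4,\frac{\Delta x\Delta y}{4}I_4)$; $D_l'=\mathrm{diag}(\Delta x I_4,\Delta y I_4,\Delta z I_4)$; $H=\frac{\hbar^2}{2m}D D_S''(D_l')^{-1}D^T+D_V''D_U$. Its generalized CFL limit is $2/\rho\!\left(\frac{1}{\hbar}(D_V'')^{-1/2}H(D_V'')^{-1/2}\right)$, with $\rho$ the spectral radius. *)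

From HB Require Import structures.
From mathcomp Require Import all_boot all_order all_algebra.
From mathcomp Require Import complex mxtens.
From mathcomp Require Import boolp classical_sets reals.
Set Implicit Arguments.
Unset Strict Implicit.
Unset Printing Implicit Defensive.
Import Order.TTheory GRing.Theory Num.Theory.
Local Open Scope ring_scope.
Local Open Scope classical_set_scope.

Notation "A *t B" := (tensmx A B)
  (at level 40, left associativity, format "A  *t  B") : ring_scope.

Definition spectral_radius (R : realType) (n : nat) (A : 'M[R]_n) : R :=
  sup [set r : R | exists z : R[i],
         eigenvalue (map_mx (fun x => x%:C%C) A) z /\ r%:C%C = `|z|].

Definition W1 (R : realType) : 'M[R]_(1, 2) := \row_(j < 2) (if j == 0 then -1 else 1).

Definition Dmat (R : realType) : 'M[R]_(8, 4 + 4 + 4) :=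
  - row_mx (row_mx
      ((1%:M : 'M[R]_2) *t (1%:M : 'M[R]_2) *t (W1 R)^T : 'M[R]_(8, 4))
      ((1%:M : 'M[R]_2) *t (W1 R)^T *t (1%:M : 'M[R]_2) : 'M[R]_(8, 4)))
      ((W1 R)^T *t (1%:M : 'M[R]_2) *t (1%:M : 'M[R]_2) : 'M[R]_(8, 4)).

Definition diag3 (R : realType) (a b c : R) : 'M[R]_(4 + 4 + 4) :=
  diag_mx (row_mx (row_mx (const_mx a : 'rV[R]_4) (const_mx b)) (const_mx c)).

Definition DV (R : realType) (dx dy dz : R) : 'M[R]_8 :=
  (dx * dy * dz / 8) *: 1%:M.
Definition DV_invsqrt (R : realType) (dx dy dz : R) : 'M[R]_8 :=
  (Num.sqrt (dx * dy * dz / 8))^-1 *: 1%:M.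
Definition DS (R : realType) (dx dy dz : R) : 'M[R]_(4 + 4 + 4) :=
  diag3 (dy * dz / 4) (dx * dz / 4) (dx * dy / 4).
Definition Dl (R : realType) (dx dy dz : R) : 'M[R]_(4 + 4 + 4) :=
  diag3 dx dy dz.

(* local node l (0-based, l = a + 2b + 4c) has offsets a, b, c *)
Definition loc_a (l : 'I_8) : nat := l %% 2.
Definition loc_b (l : 'I_8) : nat := (l %/ 2) %% 2.
Definition loc_c (l : 'I_8) : nat := l %/ 4.

Definition Hcell (R : realType) (hbar m dx dy dz : R) (Uloc : 'I_8 -> R)
  : 'M[R]_8 :=
  (hbar ^+ 2 / (2 * m)) *:
     (Dmat R *m DS dx dy dz *m invmx (Dl dx dy dz) *m (Dmat R)^T)
  + DV dx dy dz *m diag_mx (\row_l Uloc l).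

Definition dt_CFL_gen (R : realType) (hbar m dx dy dz : R) (Uloc : 'I_8 -> R)
  : R :=
  2 / spectral_radius
        (hbar^-1 *: (DV_invsqrt dx dy dz *m Hcell hbar m dx dy dz Uloc
                       *m DV_invsqrt dx dy dz)).

(* CFL limit of the whole region; U is indexed by 0-based nodes
   (paper node (i,j,k) = our (i-1,j-1,k-1)). *)
Definition dt_CFL (R : realType) (hbar m dx dy dz : R) (nx ny nz : nat)
  (U : 'I_nx.+1 -> 'I_ny.+1 -> 'I_nz.+1 -> R) : R :=
  2 / ((2 * hbar / m) * (dx ^- 2 + dy ^- 2 + dz ^- 2)
       + (\big[Num.max/0]_(i < nx.+1) \big[Num.max/0]_(j < ny.+1)
            \big[Num.max/0]_(k < nz.+1) `|U i j k|) / hbar).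

Definition cellU (R : realType) (nx ny nz : nat)
  (U : 'I_nx.+1 -> 'I_ny.+1 -> 'I_nz.+1 -> R)
  (i : 'I_nx) (j : 'I_ny) (k : 'I_nz) : 'I_8 -> R :=
  fun l => U (inord (i + loc_a l)) (inord (j + loc_b l)) (inord (k + loc_c l)).

From HB Require Import structures.
From mathcomp Require Import all_boot all_order all_algebra.
From mathcomp Require Import complex mxtens.
From mathcomp Require Import boolp classical_sets reals.
From mathcomp Require Import ring lra.
Set Implicit Arguments.
Unset Strict Implicit.
Unset Printing Implicit Defensive.
Import Order.TTheory GRing.Theory Num.Theory.
Local Open Scope ring_scope.

(* For a single cell, A := hbar^-1 D_V''^(-1/2) H D_V''^(-1/2) is a real
   symmetric matrix with entries (hbar / (2 m V)) (D W D^T)_ij + delta_ij U_j / hbar,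
   where V = dx dy dz / 8 and W = D_S'' (D_l')^-1 is diagonal and positive.
   Every edge of the cell has two end nodes and every node lies on one edge in
   each direction, so each absolute column sum of A is at most
   (2 hbar / m)(dx^-2 + dy^-2 + dz^-2) + max |U| / hbar, which by Gershgorin
   bounds rho(A).  Being symmetric and nonzero, A is not nilpotent, so it has a
   nonzero eigenvalue and rho(A) > 0; hence 2 / rho(A) >= dt_CFL for every cell. *)

Local Notation liftC A := (map_mx (fun x => x%:C%C) A).

Section ComplexLift.
Variable R : rcfType.

Lemma normc_real (x : R) : `|x%:C%C| = `|x|%:C%C.
Proof. by rewrite normc_def /= expr0n /= addr0 sqrtr_sqr. Qed.

Lemma normc_ReE (z : R[i]) : `|z| = (complex.Re `|z|)%:C%C.
Proof. by rewrite RRe_real // normr_real. Qed.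

(* Gershgorin's theorem for columns: compare the [j]-th entries of [v B = z v]
   at a coordinate [j] where [|v_j|] is largest. *)
Lemma eigenvalue_norm_le_colsum n (B : 'M[R[i]]_n) z :
  eigenvalue B z -> exists j, `|z| <= \sum_i `|B i j|.
Proof.
move/eigenvalueP => [v vB v_neq0].
have [i0 [j0 vj0_neq0]] := matrix0Pn _ v_neq0; rewrite (ord1 i0) in vj0_neq0.
pose f j := complex.Re `|v 0 j|.
have [j _ vj_max] := @arg_maxP _ _ _ j0 xpredT f isT.
exists j.
have vj_gt0 : 0 < `|v 0 j|.
  by rewrite normc_ReE ltcR (lt_le_trans _ (vj_max j0 isT)) // -ltcR -normc_ReE normr_gt0.
have zvj : z * v 0 j = \sum_i v 0 i * B i j.
  by move/matrixP: vB => /(_ 0 j); rewrite !mxE => <-.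
rewrite -(ler_pM2r vj_gt0) -normrM zvj mulr_suml.
apply: le_trans (ler_norm_sum _ _ _) (ler_sum _ _) => i _.
rewrite normrM mulrC ler_wpM2l // normc_ReE [X in _ <= X]normc_ReE lecR.
exact: vj_max.
Qed.

Lemma eigenvalue_lift_le_colsum n (A : 'M[R]_n) z :
  eigenvalue (liftC A) z -> exists j, `|z| <= (\sum_i `|A i j|)%:C%C.
Proof.
move/eigenvalue_norm_le_colsum => [j zj]; exists j.
suff <- : \sum_i `|liftC A i j| = (\sum_i `|A i j|)%:C%C by [].
by rewrite rmorph_sum; apply: eq_bigr => i _; rewrite mxE normc_real.
Qed.

End ComplexLift.

Lemma closed_monic_roots0 (F : closedFieldType) (p : {poly F}) :
  p \is monic -> (forall z, root p z -> z = 0) -> exists k, p = 'X^k.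
Proof.
move=> /monicP p_monic p_roots0; have [r pE] := closed_field_poly_normal p.
rewrite {}pE p_monic scale1r in p_roots0 *; exists (size r).
have r0 : {in r, forall z, z = 0}.
  by move=> z zr; apply: p_roots0; rewrite root_prod_XsubC.
elim: r {p_roots0} r0 => [|z r IH] r0; first by rewrite big_nil expr0.
rewrite big_cons IH => [|y yr]; last by apply: r0; rewrite inE yr orbT.
by rewrite (r0 z (mem_head _ _)) subr0 exprS.
Qed.

Section SymmetricMatrices.
Variables (R : realDomainType) (n : nat).
Implicit Type A : 'M[R]_n.

Lemma sym_mx_sqr_eq0 A : A^T = A -> A *m A = 0 -> A = 0.
Proof.
move=> A_sym AA0; have AE k l : A k l = A l k by rewrite -{1}A_sym mxE.
apply/matrixP => i j; rewrite mxE.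
have : (A *m A) i i = 0 by rewrite AA0 mxE.
rewrite mxE => /eqP; rewrite psumr_eq0 => [/allP /(_ j (mem_index_enum _)) |k _].
  by rewrite [A j i]AE mulf_eq0 orbb => /eqP.
by rewrite [A k i]AE -expr2 sqr_ge0.
Qed.

Lemma trmx_sym_exp A k : A^T = A -> (A ^+ k)^T = A ^+ k.
Proof.
move=> A_sym; elim: k => [|k IH]; first by rewrite expr0 trmx1.
by rewrite exprS -mulmxE trmx_mul IH A_sym mulmxE -exprSr exprS.
Qed.

(* [A^(k+2) = 0] gives [(A^(k+1))^2 = 0], hence [A^(k+1) = 0] by symmetry. *)
Lemma sym_mx_nilpotent_eq0 A k : A^T = A -> A ^+ k = 0 -> A = 0.
Proof.
move=> A_sym; case: k => [|k]; first by rewrite expr0 => A0; rewrite -[A]mulr1 A0 mulr0.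
elim: k => [|k IH] Ak0; first by rewrite expr1 in Ak0.
apply: IH; apply: sym_mx_sqr_eq0; first exact: trmx_sym_exp.
by rewrite mulmxE -exprD addSn -addnS exprD Ak0 mulr0.
Qed.

End SymmetricMatrices.

(* If [0] were the only complex eigenvalue, the characteristic polynomial
   would be ['X^k] and Cayley-Hamilton would make [A] nilpotent. *)
Lemma sym_mx_eigenvalue_neq0 (R : rcfType) n (A : 'M[R]_n.+1) :
  A^T = A -> A != 0 -> exists2 z, eigenvalue (liftC A) z & z != 0.
Proof.
move=> A_sym A_neq0; apply: contrapT => no_eig.
have roots0 z : root (char_poly (liftC A)) z -> z = 0.
  rewrite -eigenvalue_root_char => Az; apply: contrapT => /eqP z_neq0.
  by apply: no_eig; exists z.
have [k charA] := closed_monic_roots0 (char_poly_monic (liftC A)) roots0.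
have := Cayley_Hamilton (liftC A).
rewrite charA rmorphXn /= horner_mx_X -(rmorphXn (map_mx (real_complex R))) /=.
move=> /matrixP Ak0; suff Ak : A ^+ k = 0.
  by move: A_neq0; rewrite (sym_mx_nilpotent_eq0 A_sym Ak) eqxx.
by apply/matrixP => i j; have := Ak0 i j; rewrite !mxE => -[].
Qed.

Section SpectralRadius.
Local Open Scope classical_set_scope.
Variable R : realType.

Definition eigenmoduli n (A : 'M[R]_n) : set R :=
  [set r | exists z, eigenvalue (liftC A) z /\ r%:C%C = `|z|].

Lemma eigenmoduli_ubound n (A : 'M[R]_n) b :
  (forall j, \sum_i `|A i j| <= b) -> ubound (eigenmoduli A) b.
Proof.
move=> colsum r [z [Az rz]]; have [j zj] := eigenvalue_lift_le_colsum Az.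
by rewrite -lecR rz (le_trans zj) // lecR.
Qed.

Lemma spectral_radius_sym_gt0_le n (A : 'M[R]_n.+1) b :
  A^T = A -> A != 0 -> (forall j, \sum_i `|A i j| <= b) ->
  0 < spectral_radius A <= b.
Proof.
move=> A_sym A_neq0 colsum; rewrite /spectral_radius -/(eigenmoduli A).
have ubA := eigenmoduli_ubound colsum.
have [z Az z_neq0] := sym_mx_eigenvalue_neq0 A_sym A_neq0.
have Az_mod : eigenmoduli A (complex.Re `|z|) by exists z; rewrite -normc_ReE.
apply/andP; split; last by apply: ge_sup => //; exists (complex.Re `|z|).
apply: lt_le_trans (ub_le_sup _ Az_mod); last by exists b.
by rewrite -ltcR -normc_ReE normr_gt0.
Qed.

End SpectralRadius.

Section Incidence.
Variable R : realType.

Definition incidence_sign (x : nat) : int := if x == 0 then 1 else -1.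

(* Node [l] has offsets [a = l %% 2], [b = l %/ 2 %% 2], [c = l %/ 4]; edges
   [0..3] are parallel to the x axis and numbered [2c + b], edges [4..7] to the
   y axis, numbered [2c + a], edges [8..11] to the z axis, numbered [2b + a]. *)
Definition incidence (l e : nat) : int :=
  let a := (l %% 2)%N in let b := (l %/ 2 %% 2)%N in let c := (l %/ 4)%N in
  if (e < 4)%N then (if (2 * c + b == e)%N then incidence_sign a else 0)
  else if (e < 8)%N then (if (2 * c + a == e - 4)%N then incidence_sign b else 0)
  else (if (2 * b + a == e - 8)%N then incidence_sign c else 0).

Lemma Dmat_incidence (l : 'I_8) (e : 'I_(4 + 4 + 4)) :
  Dmat R l e = (incidence l e)%:~R.
Proof.
rewrite /Dmat !mxE; case: (@splitP (4 + 4) 4 e) => [e1 ->|e' ->]; rewrite mxE;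
  [case: (@splitP 4 4 e1) => [e' ->|e' ->]; rewrite mxE|];
  case: l => [[|[|[|[|[|[|[|[|//]]]]]]]] ?]; case: e' => [[|[|[|[|//]]]] ?];
  by rewrite !mxE /incidence /incidence_sign /= ?mulr1 ?mul1r ?mulr0 ?mul0r ?oppr0 ?mulrN ?opprK.
Qed.

Lemma Dmat_col_normsum e : \sum_(i < 8) `|Dmat R i e| = 2.
Proof.
under eq_bigr do rewrite Dmat_incidence.
rewrite !big_ord_recr big_ord0 /=.
case: e => [[|[|[|[|[|[|[|[|[|[|[|[|//]]]]]]]]]]]] ?];
rewrite /incidence /incidence_sign /= ?normrN ?normr1 ?normr0; lra.
Qed.

Definition edge_weight (a b c : R) (e : 'I_(4 + 4 + 4)) : R :=
  if (e < 4)%N then a else if (e < 8)%N then b else c.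

Lemma edge_weightM a b c a' b' c' e :
  edge_weight a b c e * edge_weight a' b' c' e = edge_weight (a * a') (b * b') (c * c') e.
Proof. by rewrite /edge_weight; case: ifP => _ //; case: ifP. Qed.

Lemma edge_weight_ge0 a b c e :
  0 <= a -> 0 <= b -> 0 <= c -> 0 <= edge_weight a b c e.
Proof. by move=> a_ge0 b_ge0 c_ge0; rewrite /edge_weight; case: ifP => _ //; case: ifP. Qed.

Lemma diag3E a b c : diag3 a b c = diag_mx (\row_e edge_weight a b c e).
Proof.
congr diag_mx; apply/rowP => e; rewrite !mxE /edge_weight.
case: (@splitP (4 + 4) 4 e) => [e1 ->|e2 ->]; rewrite mxE.
  by case: (@splitP 4 4 e1) => [e3 _|e4 _]; rewrite mxE.
by rewrite ltnNge leq_addr.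
Qed.

Lemma invmx_Dl (dx dy dz : R) : dx != 0 -> dy != 0 -> dz != 0 ->
  invmx (Dl dx dy dz) = diag3 dx^-1 dy^-1 dz^-1.
Proof.
move=> dx_neq0 dy_neq0 dz_neq0.
have Dl_inv : Dl dx dy dz *m diag3 dx^-1 dy^-1 dz^-1 = 1%:M.
  rewrite /Dl !diag3E mulmx_diag; apply/matrixP => i j; rewrite !mxE edge_weightM.
  by rewrite /edge_weight !mulfV //; case: ifP => _ //; case: ifP.
have [Dl_unit _] := mulmx1_unit Dl_inv.
by rewrite -[diag3 _ _ _](mulKmx Dl_unit) Dl_inv mulmx1.
Qed.

Lemma Dmat_weighted_row_normsum a b c (j : 'I_8) :
  \sum_e edge_weight a b c e * `|Dmat R j e| = a + b + c.
Proof.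
under eq_bigr do rewrite Dmat_incidence.
rewrite !big_ord_recr big_ord0 /=.
case: j => [[|[|[|[|[|[|[|[|//]]]]]]]] ?];
rewrite /incidence /incidence_sign /edge_weight /= ?normrN ?normr1 ?normr0; lra.
Qed.

Lemma Dmat_weighted_normsum a b c (j : 'I_8) :
  \sum_i \sum_e `|Dmat R i e| * edge_weight a b c e * `|Dmat R j e| = 2 * (a + b + c).
Proof.
rewrite exchange_big /= -(Dmat_weighted_row_normsum _ _ _ j) mulr_sumr.
apply: eq_bigr => e _; rewrite -(Dmat_col_normsum e) !mulr_suml.
by apply: eq_bigr => i _; rewrite mulrA.
Qed.

Lemma Dmat_weighted_01 a b c :
  \sum_e Dmat R 0 e * edge_weight a b c e * Dmat R 1 e = - a.
Proof.
under eq_bigr do rewrite !Dmat_incidence.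
by rewrite !big_ord_recr big_ord0 /= /incidence /incidence_sign /edge_weight /=; lra.
Qed.

End Incidence.

Section CellOperator.
Variables (R : realType) (hbar m dx dy dz : R) (U : 'I_8 -> R).
Hypotheses (hbar_gt0 : 0 < hbar) (m_gt0 : 0 < m).
Hypotheses (dx_gt0 : 0 < dx) (dy_gt0 : 0 < dy) (dz_gt0 : 0 < dz).

Definition cell_operator : 'M[R]_8 :=
  hbar^-1 *: (DV_invsqrt dx dy dz *m Hcell hbar m dx dy dz U *m DV_invsqrt dx dy dz).

Local Notation volume := (dx * dy * dz / 8).
Local Notation coupling := (hbar / (2 * m * volume)).
(* the diagonal of [D_S'' (D_l')^-1] *)
Local Notation weight := (edge_weight (dy * dz / 4 / dx) (dx * dz / 4 / dy) (dx * dy / 4 / dz)).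

Let volume_gt0 : 0 < volume.
Proof. by rewrite ?(divr_gt0, mulr_gt0). Qed.

Let coupling_gt0 : 0 < coupling.
Proof. by rewrite ?(divr_gt0, mulr_gt0). Qed.

Let weight_ge0 e : 0 <= weight e.
Proof. by apply: edge_weight_ge0; rewrite ltW // ?(divr_gt0, mulr_gt0). Qed.

Lemma cell_operatorE i j :
  cell_operator i j =
  coupling * (\sum_e Dmat R i e * weight e * Dmat R j e) + (i == j)%:R * (U j / hbar).
Proof.
rewrite /cell_operator /DV_invsqrt /Hcell /DV !scalemx1.
rewrite mul_scalar_mx mul_mx_scalar mul_scalar_mx.
rewrite invmx_Dl ?lt0r_neq0 // /DS !diag3E.
move: (Dmat R) => D; rewrite -(mulmxA D) mulmx_diag mul_mx_diag !mxE.
under eq_bigr do rewrite !mxE edge_weightM.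
have sqrt_volumeV : (Num.sqrt volume)^-1 * (Num.sqrt volume)^-1 = volume^-1.
  by rewrite -invfM -expr2 sqr_sqrtr // ltW.
rewrite [X in hbar^-1 * X]mulrA sqrt_volumeV.
by case: eqVneq => [->|_]; rewrite ?mulr1n ?mulr0n ?mulr0 ?mul0r; field; rewrite !lt0r_neq0.
Qed.

Lemma cell_operator_sym : cell_operator^T = cell_operator.
Proof.
apply/matrixP => i j; rewrite mxE !cell_operatorE.
congr (_ * _ + _); first by apply: eq_bigr => e _; ring.
by case: eqVneq => [->|]; rewrite ?mul0r.
Qed.

(* Nodes [0] and [1] share an x-edge. *)
Lemma cell_operator_neq0 : cell_operator != 0.
Proof.
apply/matrix0Pn; exists 0, 1; rewrite cell_operatorE Dmat_weighted_01 mul0r addr0.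
by rewrite mulf_neq0 ?oppr_eq0 ?lt0r_neq0 // !divr_gt0 ?mulr_gt0.
Qed.

Lemma cell_operator_colsum_le j :
  \sum_i `|cell_operator i j| <=
  (2 * hbar / m) * (dx ^- 2 + dy ^- 2 + dz ^- 2) + `|U j| / hbar.
Proof.
have entry_le i : `|cell_operator i j| <=
    coupling * (\sum_e `|Dmat R i e| * weight e * `|Dmat R j e|)
    + (i == j)%:R * (`|U j| / hbar).
  rewrite cell_operatorE; apply: le_trans (ler_normD _ _) (lerD _ _).
    rewrite normrM (gtr0_norm coupling_gt0) ler_pM2l //.
    apply: le_trans (ler_norm_sum _ _ _) _; apply: ler_sum => e _.
    by rewrite !normrM (ger0_norm (weight_ge0 e)).
  by rewrite normrM normr_nat normrM normfV (gtr0_norm hbar_gt0).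
apply: le_trans (ler_sum _ (fun i _ => entry_le i)) _.
rewrite big_split /= -mulr_sumr Dmat_weighted_normsum.
rewrite (bigD1 j) //= eqxx mul1r big1 ?addr0 => [|i /negbTE ->]; last by rewrite mul0r.
rewrite lerD2r le_eqVlt; apply/orP; left; apply/eqP.
by field; rewrite ?lt0r_neq0.
Qed.

Lemma dt_CFL_gen_ge (Umax : R) : (forall l, `|U l| <= Umax) ->
  2 / ((2 * hbar / m) * (dx ^- 2 + dy ^- 2 + dz ^- 2) + Umax / hbar)
  <= dt_CFL_gen hbar m dx dy dz U.
Proof.
move=> U_le; set b := (2 * hbar / m * _ + _).
have colsum_le j : \sum_i `|cell_operator i j| <= b.
  by apply: le_trans (cell_operator_colsum_le j) _; rewrite lerD2l ler_pM2r ?invr_gt0.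
have /andP[rho_gt0 rho_le] :=
  spectral_radius_sym_gt0_le cell_operator_sym cell_operator_neq0 colsum_le.
change (2 / b <= 2 / spectral_radius cell_operator).
by rewrite ler_pM2l // lef_pV2 ?posrE // (lt_le_trans rho_gt0).
Qed.

End CellOperator.

Local Open Scope classical_set_scope.

Theorem corollary1 (R : realType) (hbar m dx dy dz : R) (nx ny nz : nat)
  (U : 'I_nx.+1 -> 'I_ny.+1 -> 'I_nz.+1 -> R) :
  0 < hbar -> 0 < m -> 0 < dx -> 0 < dy -> 0 < dz ->
  (0 < nx)%N -> (0 < ny)%N -> (0 < nz)%N ->
  dt_CFL hbar m dx dy dz U <=
  inf [set t : R | exists (i : 'I_nx) (j : 'I_ny) (k : 'I_nz),
         t = dt_CFL_gen hbar m dx dy dz (cellU U i j k)].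
Proof.
move=> hbar_gt0 m_gt0 dx_gt0 dy_gt0 dz_gt0 nx_gt0 ny_gt0 nz_gt0.
apply: lb_le_inf.
  exists (dt_CFL_gen hbar m dx dy dz (cellU U (Ordinal nx_gt0) (Ordinal ny_gt0) (Ordinal nz_gt0))).
  by exists (Ordinal nx_gt0), (Ordinal ny_gt0), (Ordinal nz_gt0).
move=> _ [i [j [k ->]]]; apply: dt_CFL_gen_ge => // l.
rewrite /cellU; set a := inord _; set b := inord _; set c := inord _.
apply: le_trans (le_bigmax _ (fun k => `|U a b k|) c) _.
apply: le_trans (le_bigmax _ (fun j => \big[Num.max/0]_(k < nz.+1) `|U a j k|) b) _.
exact: (le_bigmax _ (fun i => \big[Num.max/0]_(j < ny.+1) \big[Num.max/0]_(k < nz.+1) `|U i j k|) a).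
Qed.
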